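(* Let $G\neq 1$ be a finite group with $G=AB$ for subgroups $A,B$. The following are pairwise equivalent: (1) $G=AB$ is a core-factorisation. (2) There is a normal series $1=N_0\trianglelefteq N_1\trianglelefteq\cdots\trianglelefteq N_n=G$ of $G$ (all $N_i\trianglelefteq G$) such that for each $1\le i\le n$, either $N_i/N_{i-1}\le AN_{i-1}/N_{i-1}$ or $N_i/N_{i-1}\le BN_{i-1}/N_{i-1}$. (3) For every proper normal subgroup $K$ of $G$ there is a normal subgroup $M$ of $G$ with $K<M$ such that $M/K\le AK/K$ or $M/K\le BK/K$. Moreover, in (1) and (2), each term $N_i$ of such a (chief, resp. normal) series satisfies $N_i=(N_i\cap A)(N_i\cap B)$, and for $N_i\neq 1$ the factorisation $N_i=(N_i\cap A)(N_i\cap B)$ is again a core-factorisation.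
   Context: All groups are finite. A subgroup $U$ of $G$ covers a section $V/W$ ($W\trianglelefteq V\le G$) if $W(U\cap V)=V$. If $1\neq G=AB$ is a product of subgroups $A$ and $B$, then $G=AB$ is called a core-factorisation if $G$ possesses a chief series each of whose chief factors is covered by $A$ or by $B$. *)

From HB Require Import structures.
From mathcomp Require Import all_boot all_order all_fingroup all_solvable.
Set Implicit Arguments. Unset Strict Implicit. Unset Printing Implicit Defensive.
Local Open Scope group_scope.

Definition covers (gT : finGroupType) (U V W : {set gT}) : Prop :=
  W * (U :&: V) = V.

Definition chief_series (gT : finGroupType) (G : {set gT})
  (N : nat -> {group gT}) (n : nat) : Prop :=
  N 0 = 1 :> {set gT} /\ N n = G :> {set gT} /\
  (forall i, 0 < i <= n -> chief_factor G (N i.-1) (N i)).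

Definition normal_series (gT : finGroupType) (G : {set gT})
  (N : nat -> {group gT}) (n : nat) : Prop :=
  N 0 = 1 :> {set gT} /\ N n = G :> {set gT} /\
  (forall i, i <= n -> N i <| G) /\
  (forall i, 0 < i <= n -> N i.-1 \subset N i).

Definition core_factorisation (gT : finGroupType) (G A B : {set gT}) : Prop :=
  G != 1 /\ G = A * B /\
  exists (N : nat -> {group gT}) (n : nat),
    chief_series G N n /\
    (forall i, 0 < i <= n -> covers A (N i) (N i.-1) \/ covers B (N i) (N i.-1)).

Definition normal_series_cond (gT : finGroupType) (G A B : {set gT})
  (N : nat -> {group gT}) (n : nat) : Prop :=
  normal_series G N n /\
  (forall i, 0 < i <= n ->
     (N i / N i.-1 \subset (A * N i.-1) / N i.-1) \/
     (N i / N i.-1 \subset (B * N i.-1) / N i.-1)).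

From mathcomp Require Import all_boot all_order all_fingroup all_solvable.
From mathcomp Require Import zify.
Set Implicit Arguments. Unset Strict Implicit. Unset Printing Implicit Defensive.
Local Open Scope group_scope.

(* Proof strategy.  All three conditions of the theorem are compared with
   one intermediate condition on a group H with subsets A and B:

     stepwise_covered H A B :  above every proper normal subgroup K of H
       lies a normal subgroup M of H with K < M and M <= K A or M <= K B.

   This is condition (3) with the quotients cleared (stepwise_coveredE).
   A normal series as in (2) gives it, not only for G but for every term
   N_i together with N_i :&: A and N_i :&: B: above K take the first term
   N_j not contained in K and M := K N_j (normal_series_stepwise).
   Conversely, iterating the condition from 1 yields a normal series as
   in (2) (normal_series_of_stepwise) and, after refining each step to a
   minimal one, a chief series as in (1) (chief_series_of_stepwise). *)

Section CoreFactorisation.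

Variable gT : finGroupType.
Implicit Types G H K M X Y A B : {group gT}.

Definition stepwise_covered (H A B : {set gT}) : Prop :=
  forall K : {group gT}, K <| H -> K \proper H ->
    exists2 M : {group gT}, M <| H /\ K \proper M &
      M \subset K * A \/ M \subset K * B.

Lemma quotient_subE K (X U : {set gT}) : X \subset 'N(K) ->
  (X / K \subset (U * K) / K) = (X \subset K * U).
Proof. by move=> nKX; rewrite quotientMidr quotientSK. Qed.

Lemma coversE (U : {set gT}) (V W : {group gT}) :
  W \subset V -> covers U V W <-> V \subset W * U.
Proof.
move=> sWV; rewrite /covers; split=> [<- | sVWU]; first exact/mulgS/subsetIl.
apply/eqP; rewrite eqEsubset mul_subG ?subsetIr //= group_modl //.
by rewrite subsetI sVWU subxx.
Qed.

Lemma series_by_steps H (step : {group gT} -> {group gT} -> Prop) :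
  (forall X, X <| H -> X \proper H ->
     exists2 Y : {group gT}, Y <| H /\ X \proper Y & step X Y) ->
  forall K, K <| H -> exists (N : nat -> {group gT}) (n : nat),
   [/\ N 0 = K, N n = H :> {set gT}, (forall i, i <= n -> N i <| H),
       (forall i, 0 < i <= n -> N i.-1 \proper N i) &
       (forall i, 0 < i <= n -> step (N i.-1) (N i))].
Proof.
move=> stepP K; have [m] := ubnP (#|H| - #|K|); elim: m K => // m IHm K ltm nsKH.
have [eKH | neKH] := eqVneq (gval K) (gval H).
  by exists (fun=> K), 0; split=> // i hi; lia.
have ltKH : K \proper H by rewrite properEneq neKH normal_sub.
have [Y [nsYH ltKY] stepKY] := stepP K nsKH ltKH.
have ltm' : #|H| - #|Y| < m.
  rewrite -ltnS (leq_trans _ ltm) //; apply: ltn_sub2l (proper_card ltKY).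
  exact: leq_trans (proper_card ltKY) (subset_leq_card (normal_sub nsYH)).
have [N [n [N0 Nn nsNH ltN stepN]]] := IHm Y ltm' nsYH.
exists (fun i => if i is j.+1 then N j else K), n.+1; split=> //.
- by case=> [|i] hi //; apply: nsNH.
- by case=> [|[|i]] //= hi; [rewrite N0 | apply: (ltN i.+1)].
- by case=> [|[|i]] //= hi; [rewrite N0 | apply: (stepN i.+1)].
Qed.

Lemma normal_series_sub G (N : nat -> {group gT}) n : normal_series G N n ->
  forall j k, j <= k <= n -> N j \subset N k.
Proof.
case=> _ [_ [_ sN]] j; elim=> [|k IHk] /andP[le_jk le_kn].
  by have -> : j = 0 by lia.
have [-> // | ne_jk] := eqVneq j k.+1.
exact: subset_trans (IHk ltac:(lia)) (sN k.+1 ltac:(lia)).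
Qed.

Lemma normal_series_cond_step G (A B : {set gT}) (N : nat -> {group gT}) n :
  normal_series_cond G A B N n -> forall i, 0 < i <= n ->
  N i \subset N i.-1 * A \/ N i \subset N i.-1 * B.
Proof.
case=> [[_ [_ [nsNG _]]] condN] i hi.
have nNi1 : N i \subset 'N(N i.-1).
  apply: subset_trans (normal_sub (nsNG i _)) (normal_norm (nsNG i.-1 _)); lia.
by rewrite -!quotient_subE //; apply: condN.
Qed.

Lemma normal_series_factor G A B (N : nat -> {group gT}) n :
  A \subset G -> B \subset G -> normal_series_cond G A B N n ->
  forall i, i <= n -> N i :=: (N i :&: A) * (N i :&: B).
Proof.
move=> sAG sBG condN; have [[N0 [_ [nsNG sN]]] _] := condN.
elim=> [_ | i IHi le_in].
  by rewrite N0 !setI1g mulg1.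
apply/eqP; rewrite eqEsubset mul_subG ?subsetIl //= andbT.
have sNi := sN i.+1 le_in; have defNi := IHi (ltnW le_in).
have nNiG := normal_norm (nsNG i (ltnW le_in)).
have [sNiA | sNiB] := normal_series_cond_step condN (i := i.+1) le_in.
- (* N (i+1) <= N i A = A (N i :&: B), then use Dedekind's modular law. *)
  have nNiA : A \subset 'N(N i) := subset_trans sAG nNiG.
  rewrite -(normC nNiA) {1}defNi mulgA (mulGSid (subsetIr _ _)) in sNiA.
  apply: subset_trans (_ : _ \subset (N i.+1 :&: A) * (N i :&: B)) _.
    by rewrite group_modr ?subsetI ?sNiA ?subxx // (subset_trans (subsetIl _ _) sNi).
  by apply/mulgS/setSI.
- (* N (i+1) <= N i B = (N i :&: A) B, then use Dedekind's modular law. *)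
  rewrite {1}defNi -mulgA (mulSGid (subsetIr _ _)) in sNiB.
  apply: subset_trans (_ : _ \subset (N i :&: A) * (B :&: N i.+1)) _.
    by rewrite group_modl ?subsetI ?sNiB ?subxx // (subset_trans (subsetIl _ _) sNi).
  by apply: mulgSS; [apply: setSI | rewrite setIC].
Qed.

(* A series as in (2) makes every term N i stepwise covered by its
   intersections with A and B: above K take K N j for the first term N j
   not contained in K. *)
Lemma normal_series_stepwise G A B (N : nat -> {group gT}) n :
  normal_series_cond G A B N n ->
  forall i, i <= n -> stepwise_covered (N i) (N i :&: A) (N i :&: B).
Proof.
move=> condN i le_in K nsKNi ltKNi.
have [[N0 [_ [nsNG _]]] _] := condN.
have nsNiG := nsNG i le_in.
have nsubNiK : ~~ (N i \subset K) by move: ltKNi; rewrite properE => /andP[].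
have [j nsubNjK minj] := ex_minnP (ex_intro (fun j => ~~ (N j \subset K)) i nsubNiK).
have le_ji : j <= i := minj i nsubNiK.
have j_gt0 : 0 < j by move: nsubNjK; case: (j) => //; rewrite N0 sub1G.
have sNj1K : N j.-1 \subset K by apply: contraT => /minj; lia.
have nsNjG := nsNG j ltac:(lia).
have sNjNi : N j \subset N i by apply: normal_series_sub condN.1 _ _ _; lia.
have nNjK : K \subset 'N(N j).
  exact: subset_trans (subset_trans (normal_sub nsKNi) (normal_sub nsNiG))
                      (normal_norm nsNjG).
exists (K <*> N j)%G; first split.
- exact: normalY nsKNi (normalS sNjNi (normal_sub nsNiG) nsNjG).
- rewrite properE joing_subl /=; apply: contra nsubNjK.
  exact: subset_trans (joing_subr _ _).
- (* K N j <= K N (j-1) U = K U, and K N j <= N i, so Dedekind's law applies. *)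
  have sKNjNi : K * N j \subset N i := mul_subG (normal_sub nsKNi) sNjNi.
  rewrite /= norm_joinEl // !(setIC (N i)).
  have [sNjU | sNjU] := normal_series_cond_step condN (i := j) ltac:(lia);
    [left | right]; rewrite group_modl ?(normal_sub nsKNi) // subsetI sKNjNi andbT;
    by apply: subset_trans (mulgS K sNjU) _; rewrite mulgA mulGSid.
Qed.

(* Every normal step K < M of H can be refined to a chief factor K < M'
   of H with M' <= M: take M' minimal among the normal subgroups of H
   strictly between K and M. *)
Lemma chief_factor_below H K M : K <| H -> K \proper M -> M <| H ->
  exists2 M' : {group gT}, chief_factor H K M' & M' \subset M.
Proof.
move=> nsKH ltKM nsMH.
pose P (Y : {group gT}) := [&& K \proper Y, Y \subset M & H \subset 'N(Y)].
have [M' minM'] : {M' : {group gT} | mingroup M' P}.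
  by apply: ex_mingroup; exists M; rewrite /P ltKM subxx normal_norm.
case/mingroupP: minM' => /and3P[ltKM' sM'M nM'H] minM'.
have sM'H : M' \subset H := subset_trans sM'M (normal_sub nsMH).
exists M' => //; rewrite /chief_factor /normal sM'H nM'H !andbT.
apply/maxgroupP; split; first by rewrite ltKM' normal_norm.
move=> Y /andP[ltYM' nYH] sKY.
apply/eqP; rewrite eqEsubset sKY andbT; apply: contraT => nsubYK.
have ltKY : K \proper Y by rewrite properE sKY nsubYK.
have sYM := subset_trans (proper_sub ltYM') sM'M.
have eYM' : Y :=: M' by apply: minM'; rewrite ?proper_sub // /P ltKY sYM nYH.
by rewrite eYM' properxx in ltYM'.
Qed.

Lemma chief_series_of_stepwise H (A B : {set gT}) : stepwise_covered H A B ->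
  exists (N : nat -> {group gT}) (n : nat), chief_series H N n /\
    (forall i, 0 < i <= n -> covers A (N i) (N i.-1) \/ covers B (N i) (N i.-1)).
Proof.
move=> stepH.
pose step K M := chief_factor H K M /\ (covers A M K \/ covers B M K).
have stepP K : K <| H -> K \proper H ->
    exists2 M : {group gT}, M <| H /\ K \proper M & step K M.
  move=> nsKH ltKH; have [M [nsMH ltKM] covM] := stepH K nsKH ltKH.
  have [M' chiefM' sM'M] := chief_factor_below nsKH ltKM nsMH.
  have ltKM' : K \proper M' by case/andP: chiefM' => /maxnormal_proper.
  exists M'; first by case/andP: chiefM'.
  split=> //; case: covM => sMKU; [left | right];
    by apply/(coversE _ (proper_sub ltKM'))/(subset_trans sM'M).
have [N [n [N0 Nn _ _ stepN]]] := series_by_steps stepP (normal1 H).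
exists N, n; split; first by split; [rewrite N0 | split=> // i /stepN[]].
by move=> i /stepN[].
Qed.

Lemma normal_series_of_stepwise G A B : stepwise_covered G A B ->
  exists (N : nat -> {group gT}) (n : nat), normal_series_cond G A B N n.
Proof.
move=> stepG.
have [N [n [N0 Nn nsNG ltN covN]]] :=
  series_by_steps (step := fun K M => M \subset K * A \/ M \subset K * B) stepG
    (normal1 G).
exists N, n; split.
  by split; [rewrite N0 | do 2 split=> //; move=> i /ltN/proper_sub].
move=> i hi; have nNi1 : N i \subset 'N(N i.-1).
  apply: subset_trans (normal_sub (nsNG i _)) (normal_norm (nsNG i.-1 _)); lia.
by rewrite !quotient_subE //; apply: covN.
Qed.

Lemma stepwise_coveredE G A B : stepwise_covered G A B <->
  (forall K : {group gT}, K <| G -> K \proper G ->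
     exists2 M : {group gT}, M <| G /\ K \proper M &
       (M / K \subset (A * K) / K) \/ (M / K \subset (B * K) / K)).
Proof.
have nKM K M : K <| G -> M <| G -> M \subset 'N(K).
  by move=> nsKG nsMG; apply: subset_trans (normal_sub nsMG) (normal_norm nsKG).
by split=> stepG K nsKG ltKG; have [M [nsMG ltKM] covM] := stepG K nsKG ltKG;
  exists M; rewrite // !quotient_subE ?nKM in covM *.
Qed.

Lemma chief_series_cond G A B (N : nat -> {group gT}) n :
  chief_series G N n ->
  (forall i, 0 < i <= n -> covers A (N i) (N i.-1) \/ covers B (N i) (N i.-1)) ->
  normal_series_cond G A B N n.
Proof.
case=> N0 [Nn chiefN] covN.
have stepN i : 0 < i <= n ->
    [/\ N i.-1 \proper N i, G \subset 'N(N i.-1) & N i <| G].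
  by case/chiefN/andP => /maxgroupp/andP[].
split.
  do 3 split=> //.
    by case=> [|i] hi; [rewrite N0 normal1 | case: (stepN i.+1 hi)].
  by move=> i /stepN[/proper_sub].
move=> i hi; have [ltN nNG nsNG] := stepN i hi.
have nNN := subset_trans (normal_sub nsNG) nNG.
by rewrite !quotient_subE // -!coversE ?proper_sub //; apply: covN.
Qed.

Lemma normal_series_terms G A B (N : nat -> {group gT}) n :
  A \subset G -> B \subset G -> normal_series_cond G A B N n ->
  forall i, i <= n -> N i :=: (N i :&: A) * (N i :&: B) /\
    (N i :!=: 1 -> core_factorisation (N i) (N i :&: A) (N i :&: B)).
Proof.
move=> sAG sBG condN i le_in; have defNi := normal_series_factor sAG sBG condN le_in.
split=> // ntNi; split=> //; split=> //.
exact: chief_series_of_stepwise (normal_series_stepwise condN le_in).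
Qed.

End CoreFactorisation.

Unset Implicit Arguments.

Theorem mainTheorem1 (gT : finGroupType) (G A B : {group gT})
  (ntG : G :!=: 1) (defG : G :=: A * B) :
  (* (1) <-> (2) *)
  (core_factorisation G A B <->
     exists (N : nat -> {group gT}) (n : nat), normal_series_cond G A B N n) /\
  (* (2) <-> (3) *)
  ((exists (N : nat -> {group gT}) (n : nat), normal_series_cond G A B N n) <->
     (forall K : {group gT}, K <| G -> K \proper G ->
        exists2 M : {group gT}, M <| G /\ K \proper M &
          (M / K \subset (A * K) / K) \/ (M / K \subset (B * K) / K))) /\
  (* moreover, for chief series as in (1) *)
  (forall (N : nat -> {group gT}) (n : nat),
     chief_series G N n ->
     (forall i, 0 < i <= n -> covers A (N i) (N i.-1) \/ covers B (N i) (N i.-1)) ->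
     forall i, i <= n ->
       N i :=: (N i :&: A) * (N i :&: B) /\
       (N i :!=: 1 -> core_factorisation (N i) (N i :&: A) (N i :&: B))) /\
  (* moreover, for normal series as in (2) *)
  (forall (N : nat -> {group gT}) (n : nat),
     normal_series_cond G A B N n ->
     forall i, i <= n ->
       N i :=: (N i :&: A) * (N i :&: B) /\
       (N i :!=: 1 -> core_factorisation (N i) (N i :&: A) (N i :&: B))).
Proof.
have sAG : A \subset G by rewrite defG mulG_subl.
have sBG : B \subset G by rewrite defG mulG_subr.
(* G is the last term of a series as in (2), and G :&: A = A, G :&: B = B. *)
have stepG N n : normal_series_cond G A B N n -> stepwise_covered G A B.
  move=> condN; have := normal_series_stepwise condN (leqnn n).
  by rewrite condN.1.2.1 (setIidPr sAG) (setIidPr sBG).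
split; [split | split; [split | split]].
- by case=> _ [_ [N [n [chiefN covN]]]]; exists N, n; apply: chief_series_cond.
- by case=> N [n /stepG /chief_series_of_stepwise csG]; split=> //; split.
- by case=> N [n /stepG /stepwise_coveredE].
- by move/stepwise_coveredE/normal_series_of_stepwise.
- move=> N n chiefN covN.
  exact: normal_series_terms sAG sBG (chief_series_cond chiefN covN).
- by move=> N n; apply: normal_series_terms sAG sBG.
Qed.
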